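(* Let $D$ be the automaton built from complete DFAs $A,B,C$ as described in the context. For every state $(i,S)$ of $D$, the state $(i,\mathrm{Sat}(S))$ is equivalent to $(i,S)$.
   Context: Let $A=(\Sigma,Q_A=\{0,\dots,m-1\},0,F_A,\cdot)$, $B=(\Sigma,Q_B=\{q_0,\dots,q_{n-1}\},q_0,F_B,\cdot)$, $C=(\Sigma,Q_C=\{r_0,\dots,r_{p-1}\},r_0,F_C,\cdot)$ be complete DFAs. $D=(\Sigma,Q_A\times 2^{Q_B\times Q_C},i_D,F_D,\cdot)$ where $i_D=(0,\emptyset)$ if $0\notin F_A$ and $i_D=(0,\{(q_0,r_0)\})$ otherwise; $(i,S)\in F_D$ iff $S$ contains a pair $(q,r)$ with exactly one of $q\in F_B$, $r\in F_C$; and for $a\in\Sigma$, $(i,S)\cdot a=(i\cdot a,S\cdot a)$ if $i\cdot a\notin F_A$ and $(i\cdot a,S\cdot a\cup\{(q_0,r_0)\})$ otherwise, with $S\cdot a=\{(q\cdot a,r\cdot a):(q,r)\in S\}$. Two states are equivalent if no word leads exactly one of them to $F_D$. A tableau $S\subseteq Q_B\times Q_C$ is saturated if whenever $(q_x,r_{x'}),(q_x,r_{y'}),(q_y,r_{y'})\in S$ then $(q_y,r_{x'})\in S$; $\mathrm{Sat}(S)$ is the smallest saturated tableau containing $S$. *)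

From mathcomp Require Import all_boot.
Set Implicit Arguments. Unset Strict Implicit. Unset Printing Implicit Defensive.

Section Construction.
Variables (Sigma QA QB QC : finType).
Variables (a0 : QA) (FA : {set QA}) (dA : QA -> Sigma -> QA).
Variables (q0 : QB) (FB : {set QB}) (dB : QB -> Sigma -> QB).
Variables (r0 : QC) (FC : {set QC}) (dC : QC -> Sigma -> QC).

Definition tableau := {set QB * QC}.

Definition stateD := (QA * tableau)%type.

Definition tab_step (S : tableau) (a : Sigma) : tableau :=
  [set (dB p.1 a, dC p.2 a) | p in S].

Definition initD : stateD :=
  if a0 \in FA then (a0, [set (q0, r0)]) else (a0, set0).

Definition deltaD (x : stateD) (a : Sigma) : stateD :=
  let i' := dA x.1 a in
  if i' \in FA then (i', tab_step x.2 a :|: [set (q0, r0)])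
  else (i', tab_step x.2 a).

Definition runD (x : stateD) (w : seq Sigma) : stateD := foldl deltaD x w.

Definition finalD (x : stateD) : bool :=
  [exists p in x.2, (p.1 \in FB) != (p.2 \in FC)].

Definition equivD (x y : stateD) : Prop :=
  forall w : seq Sigma, finalD (runD x w) = finalD (runD y w).

Definition saturated (S : tableau) : bool :=
  [forall qx : QB, forall qy : QB, forall rx : QC, forall ry : QC,
    [&& (qx, rx) \in S, (qx, ry) \in S & (qy, ry) \in S] ==> ((qy, rx) \in S)].

Definition Sat (S : tableau) : tableau :=
  \bigcap_(T : tableau | saturated T && (S \subset T)) T.

End Construction.

From mathcomp Require Import all_boot.

Set Implicit Arguments.
Unset Strict Implicit.

(* Sat is a closure operator, and the relation "same A-component and same
   saturation" on states of D is a congruence for the transitions: a letter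
   acts on both coordinates by a product map, and preimages of saturated
   tableaux under product maps are saturated.  It also respects the final
   states, since the pairs (q, r) with q \in FB = (r \in FC), the preimage of
   the diagonal of bool * bool, form a saturated tableau. *)

Section Saturation.
Variables QB QC : finType.
Implicit Types S T U : {set QB * QC}.

Lemma saturatedP U :
  reflect (forall qx qy rx ry, (qx, rx) \in U -> (qx, ry) \in U ->
             (qy, ry) \in U -> (qy, rx) \in U)
          (saturated U).
Proof.
apply: (iffP forallP) => [sU qx qy rx ry xx xy yy | sU qx].
  by have /forallP/(_ qy)/forallP/(_ rx)/forallP/(_ ry)/implyP := sU qx;
    apply; rewrite xx xy yy.
by do 3![apply/forallP => ?]; apply/implyP => /and3P[]; apply: sU.
Qed.

Lemma Sat_saturated S : saturated (Sat S).
Proof.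
apply/saturatedP => qx qy rx ry /bigcapP xx /bigcapP xy /bigcapP yy.
apply/bigcapP => T /[dup] /andP[/saturatedP sT _] PT.
exact: sT (xx T PT) (xy T PT) (yy T PT).
Qed.

Lemma subset_Sat S : S \subset Sat S.
Proof. by apply/bigcapsP => T /andP[]. Qed.

Lemma Sat_sub S U : saturated U -> (Sat S \subset U) = (S \subset U).
Proof.
move=> sU; apply/idP/idP => [|SU]; first exact: subset_trans (subset_Sat S).
by apply: bigcap_inf; rewrite sU SU.
Qed.

Lemma Sat_subSat S T : (Sat S \subset Sat T) = (S \subset Sat T).
Proof. exact/Sat_sub/Sat_saturated. Qed.

Lemma SatS S T : S \subset T -> Sat S \subset Sat T.
Proof. by move=> ST; rewrite Sat_subSat (subset_trans ST) ?subset_Sat. Qed.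

Lemma Sat_id S : Sat (Sat S) = Sat S.
Proof. by apply/eqP; rewrite eqEsubset Sat_subSat subxx subset_Sat. Qed.

Lemma Sat_setUr S T U : Sat S = Sat T -> Sat (S :|: U) = Sat (T :|: U).
Proof.
suff sub S' T' : Sat S' = Sat T' -> Sat (S' :|: U) \subset Sat (T' :|: U).
  by move=> eST; apply/eqP; rewrite eqEsubset !sub.
move=> eST; rewrite Sat_subSat subUset.
rewrite (subset_trans (subset_Sat S')) ?eST ?SatS ?subsetUl //=.
exact: subset_trans (subsetUr _ _) (subset_Sat _).
Qed.

End Saturation.

Section ProductMaps.
Variables QB QC QB' QC' : finType.
Variables (f : QB -> QB') (g : QC -> QC').

Local Notation prod_map := (fun p : QB * QC => (f p.1, g p.2)).

Lemma saturated_preimset (V : {set QB' * QC'}) :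
  saturated V -> saturated (prod_map @^-1: V).
Proof.
move=> /saturatedP sV; apply/saturatedP => qx qy rx ry.
by rewrite !inE /=; apply: sV.
Qed.

Lemma imset_Sat_sub (S : {set QB * QC}) :
  prod_map @: Sat S \subset Sat (prod_map @: S).
Proof.
rewrite sub_imset_pre Sat_sub; last exact/saturated_preimset/Sat_saturated.
by rewrite -sub_imset_pre subset_Sat.
Qed.

Lemma Sat_imset (S T : {set QB * QC}) :
  Sat S = Sat T -> Sat (prod_map @: S) = Sat (prod_map @: T).
Proof.
suff sub S' T' :
    Sat S' = Sat T' -> Sat (prod_map @: S') \subset Sat (prod_map @: T').
  by move=> eST; apply/eqP; rewrite eqEsubset !sub.
move=> eST; rewrite Sat_subSat (subset_trans _ (imset_Sat_sub T')) //.
by rewrite -eST imsetS ?subset_Sat.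
Qed.

End ProductMaps.

Lemma saturated_diag (T : finType) : saturated [set p : T * T | p.1 == p.2].
Proof.
by apply/saturatedP => qx qy rx ry; rewrite !inE /= => /eqP-> /eqP-> /eqP->.
Qed.

Section AutomatonD.
Variables (Sigma QA QB QC : finType).
Variables (FA : {set QA}) (dA : QA -> Sigma -> QA).
Variables (q0 : QB) (FB : {set QB}) (dB : QB -> Sigma -> QB).
Variables (r0 : QC) (FC : {set QC}) (dC : QC -> Sigma -> QC).

Local Notation deltaD := (deltaD FA dA q0 dB r0 dC).
Local Notation runD := (runD FA dA q0 dB r0 dC).
Local Notation finalD := (finalD (QA := QA) FB FC).

Definition satD (x : stateD QA QB QC) : stateD QA QB QC := (x.1, Sat x.2).

Lemma satD_deltaD x y a :
  satD x = satD y -> satD (deltaD x a) = satD (deltaD y a).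
Proof.
case: x y => [i X] [j Y] [<- eXY]; rewrite /deltaD /=.
have eXYa : Sat (tab_step dB dC X a) = Sat (tab_step dB dC Y a).
  exact: Sat_imset (dB^~ a) (dC^~ a) _ _ eXY.
by case: ifP => _; rewrite /satD /= ?(Sat_setUr _ eXYa) ?eXYa.
Qed.

Lemma satD_runD x y w : satD x = satD y -> satD (runD x w) = satD (runD y w).
Proof.
by elim: w x y => [|a w IHw] x y //= exy; apply/IHw/satD_deltaD.
Qed.

Definition agreeing : {set QB * QC} := [set p | (p.1 \in FB) == (p.2 \in FC)].

Lemma saturated_agreeing : saturated agreeing.
Proof.
have -> : agreeing =
    (fun p => (p.1 \in FB, p.2 \in FC)) @^-1: [set b : bool * bool | b.1 == b.2].
  by apply/setP => p; rewrite !inE.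
exact/saturated_preimset/saturated_diag.
Qed.

Lemma finalDE x : finalD x = ~~ (x.2 \subset agreeing).
Proof.
rewrite /agreeing; apply/existsP/subsetPn => [[p /andP[px dis]] | [p px]].
  by exists p; rewrite // inE.
by rewrite inE => dis; exists p; rewrite px.
Qed.

Lemma finalD_satD x : finalD (satD x) = finalD x.
Proof. by rewrite !finalDE /= Sat_sub // saturated_agreeing. Qed.

End AutomatonD.

Theorem lemma5 (Sigma QA QB QC : finType)
  (a0 : QA) (FA : {set QA}) (dA : QA -> Sigma -> QA)
  (q0 : QB) (FB : {set QB}) (dB : QB -> Sigma -> QB)
  (r0 : QC) (FC : {set QC}) (dC : QC -> Sigma -> QC)
  (i : QA) (S : {set QB * QC}) :
  equivD FA dA q0 FB dB r0 FC dC (i, Sat S) (i, S).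
Proof.
move=> w; rewrite -finalD_satD -[RHS]finalD_satD; congr finalD.
by apply: satD_runD; rewrite /satD /= Sat_id.
Qed.
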